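(* There exist $u_0\in\exp L^2(\mathbb{R}^N)$ and a constant $C>0$ such that $$\|e^{-t\Delta^2}u_0-u_0\|_{\exp L^2}\geq C\quad\text{for all }t>0.$$
   Context: $e^{-t\Delta^2}$ denotes the biharmonic heat semigroup on $\mathbb{R}^N$: $e^{-t\Delta^2}\varphi=E_t\star\varphi$ with $E_t(x)=(2\pi)^{-N}\int_{\mathbb{R}^N}e^{-t|\xi|^4}e^{ix\cdot\xi}\,d\xi$. The Orlicz space $\exp L^2(\mathbb{R}^N)$ is the set of $u\in L^1_{loc}(\mathbb{R}^N)$ such that $\int_{\mathbb{R}^N}(e^{|u(x)|^2/\alpha^2}-1)\,dx<\infty$ for some $\alpha>0$, with the Luxemburg norm $\|u\|_{\exp L^2}=\inf\{\alpha>0:\int_{\mathbb{R}^N}(e^{|u(x)|^2/\alpha^2}-1)\,dx\leq 1\}$. *)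

(* R^N is modelled as N.-tuple R,
   equipped (by the library) with the product Borel sigma-algebra generated
   by the coordinate projections. *)
From HB Require Import structures.
From mathcomp Require Import all_boot all_order all_algebra.
From mathcomp Require Import all_classical all_reals all_analysis.
Set Implicit Arguments. Unset Strict Implicit. Unset Printing Implicit Defensive.
Import Order.TTheory GRing.Theory Num.Theory.
Import numFieldNormedType.Exports.
Local Open Scope classical_set_scope.
Local Open Scope ring_scope.

Section RN.
Variables (R : realType) (N : nat).
Notation RN := (N.-tuple R).

Definition subRN (x y : RN) : RN := [tuple tnth x i - tnth y i | i < N].
Definition dotRN (x y : RN) : R := \sum_(i < N) tnth x i * tnth y i.
Definition sqnormRN (x : RN) : R := dotRN x x.

(* mu is Lebesgue measure on the Borel sets of R^N: the (unique) measure
   giving each half-open box prod_i ]a_i, b_i] its volume. *)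
Definition is_lebesgue_RN (mu : {measure set RN -> \bar R}) : Prop :=
  forall a b : 'I_N -> R, (forall i, a i <= b i) ->
    mu [set x : RN | forall i, a i < tnth x i <= b i] =
    (\prod_(i < N) (b i - a i))%:E.

Variable mu : {measure set RN -> \bar R}.

Definition expL2_modular (g : RN -> R) (alpha : R) : \bar R :=
  (\int[mu]_x (expR (g x ^+ 2 / alpha ^+ 2) - 1)%:E)%E.

(* Luxemburg norm  inf {alpha > 0 : modular <= 1}  (= +oo if the set is empty) *)
Definition expL2_norm (g : RN -> R) : \bar R :=
  ereal_inf [set alpha%:E | alpha in
              [set alpha : R | 0 < alpha /\ (expL2_modular g alpha <= 1)%E]].

Definition L1loc (u : RN -> R) : Prop :=
  measurable_fun setT u /\
  forall r : R, 0 < r ->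
    (\int[mu]_(x in [set x : RN | forall i, (`|tnth x i| <= r)%R]) `|u x|%:E < +oo)%E.

Definition in_expL2 (u : RN -> R) : Prop :=
  L1loc u /\ exists alpha : R, 0 < alpha /\ (expL2_modular (fun x => `|u x|%R) alpha < +oo)%E.

(* Biharmonic heat kernel E_t(x) = (2 pi)^{-N} int e^{-t|xi|^4} e^{i x.xi} dxi,
   split into real part (cos) and imaginary part (sin). *)
Definition biharm_kernel_re (t : R) (x : RN) : R :=
  (2 * pi) ^- N * Rintegral mu setT
    (fun xi => expR (- t * sqnormRN xi ^+ 2) * cos (dotRN x xi)).
Definition biharm_kernel_im (t : R) (x : RN) : R :=
  (2 * pi) ^- N * Rintegral mu setT
    (fun xi => expR (- t * sqnormRN xi ^+ 2) * sin (dotRN x xi)).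

(* e^{-t Delta^2} phi = E_t * phi, real and imaginary parts *)
Definition biharm_sg_re (t : R) (phi : RN -> R) (x : RN) : R :=
  Rintegral mu setT (fun y => biharm_kernel_re t (subRN x y) * phi y).
Definition biharm_sg_im (t : R) (phi : RN -> R) (x : RN) : R :=
  Rintegral mu setT (fun y => biharm_kernel_im t (subRN x y) * phi y).

Definition biharm_sg_diff_abs (t : R) (phi : RN -> R) (x : RN) : R :=
  Num.sqrt ((biharm_sg_re t phi x - phi x) ^+ 2 + biharm_sg_im t phi x ^+ 2).

End RN.

(* The witness is a train of spikes: u0 = k on a box of volume e^{-2k^2}/2
   placed at distance k along the first axis.  Then
   int (e^{u0^2} - 1) <= sum_k e^{k^2} e^{-2k^2} < oo, so u0 lies in exp L^2 and
   in L^1.  As e^{-t|xi|^4} is integrable, the kernel E_t is bounded, hence so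
   is e^{-t Delta^2} u0 = E_t * u0, by some M.  On the k-th spike with k > 2M
   the difference |e^{-t Delta^2} u0 - u0| is at least k/2, so for alpha < 1/4
   the modular exceeds (e^{4k^2} - 1) e^{-2k^2}/2 > 1: the Luxemburg norm is at
   least 1/4 for every t > 0. *)

From HB Require Import structures.
From mathcomp Require Import all_boot all_order all_algebra.
From mathcomp Require Import all_classical all_reals all_analysis.
From mathcomp Require Import ring lra measurable_realfun.
Import Order.TTheory GRing.Theory Num.Theory.

Set Implicit Arguments.
Unset Strict Implicit.
Unset Printing Implicit Defensive.
Local Open Scope classical_set_scope.
Local Open Scope ring_scope.

Section integral_bounds.
Context d (T : measurableType d) (R : realType) (mu : {measure set T -> \bar R}).
Local Open Scope ereal_scope.

(* The kernel and the semigroup are not known to be measurable, hence these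
   variants of library lemmas without measurability assumptions. *)
Lemma ge0_le_integral_nonmeas (D : set T) (f g : T -> \bar R) :
  (forall x, D x -> 0 <= f x) -> (forall x, D x -> f x <= g x) ->
  \int[mu]_(x in D) f x <= \int[mu]_(x in D) g x.
Proof.
move=> f0 fg.
rewrite !ge0_integralE //; last by move=> x Dx; exact: le_trans (f0 x Dx) (fg x Dx).
apply: ereal_sup_le => _ [h hf <-]; exists h => // x.
apply: le_trans (hf x) _; rewrite /patch; case: ifP => // /[!inE] Dx; exact: fg.
Qed.

Lemma le_normr_Rintegral_dom (D : set T) (h g : T -> R) :
  (forall x, D x -> `|h x| <= g x)%R -> \int[mu]_(x in D) (g x)%:E < +oo ->
  (`|Rintegral mu D h| <= Rintegral mu D g)%R.
Proof.
move=> hg gfin.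
have part (k : T -> \bar R) : (forall x, 0 <= k x <= `|(h x)%:E|) ->
    exists2 r : R, \int[mu]_(x in D) k x = r%:E & (0 <= r <= Rintegral mu D g)%R.
  move=> kh.
  have k0 x : 0 <= k x by case/andP: (kh x).
  have ik0 : 0 <= \int[mu]_(x in D) k x by exact: integral_ge0.
  have ikg : \int[mu]_(x in D) k x <= \int[mu]_(x in D) (g x)%:E.
    apply: ge0_le_integral_nonmeas => // x Dx.
    by case/andP: (kh x) => _ /le_trans; apply; rewrite lee_fin hg.
  have ikfin : \int[mu]_(x in D) k x \is a fin_num.
    by rewrite ge0_fin_numE // (le_lt_trans ikg).
  exists (fine (\int[mu]_(x in D) k x)); first by rewrite fineK.
  rewrite fine_ge0 //=; apply: fine_le => //.
  by rewrite ge0_fin_numE ?(le_trans ik0).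
have [p hp /andP[p0 pg]] : exists2 p : R,
    \int[mu]_(x in D) (fun x => (h x)%:E)^\+ x = p%:E & (0 <= p <= Rintegral mu D g)%R.
  by apply: part => x; rewrite funepos_ge0 funeposE ge_max lee_abs abse_ge0.
have [q hq /andP[q0 qg]] : exists2 q : R,
    \int[mu]_(x in D) (fun x => (h x)%:E)^\- x = q%:E & (0 <= q <= Rintegral mu D g)%R.
  by apply: part => x; rewrite funeneg_ge0 funenegE ge_max -abseN lee_abs abse_ge0.
rewrite /Rintegral in pg qg *; rewrite integralE hp hq -EFinD /= ler_norml.
by apply/andP; split; lra.
Qed.

Lemma integral_scaled_indic (A : set T) (c : R) : measurable A -> (0 <= c)%R ->
  \int[mu]_x (c * \1_A x)%:E = c%:E * mu A.
Proof.
move=> mA c0; rewrite (integralZl_indic _ (fun=> A)) //; last by rewrite ltNge c0.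
by rewrite integral_indic // setIT.
Qed.

Lemma integral_le_nneseries_indic (f : T -> \bar R) (c : nat -> R) (A : nat -> set T) :
  (forall k, measurable (A k)) -> (forall k, 0 <= c k)%R -> (forall x, 0 <= f x) ->
  (forall x, f x <= \sum_(k <oo) (c k * \1_(A k) x)%:E) ->
  \int[mu]_x f x <= \sum_(k <oo) (c k)%:E * mu (A k).
Proof.
move=> mA c0 f0 fA.
apply: le_trans (ge0_le_integral_nonmeas (fun x _ => f0 x) (fun x _ => fA x)) _.
rewrite integral_nneseries //.
- by rewrite (eq_eseriesr (fun k _ => integral_scaled_indic (mA k) (c0 k))).
- by move=> k; apply/measurable_EFinP/measurable_funM.
- by move=> k x _; rewrite lee_fin mulr_ge0.
Qed.

End integral_bounds.

Lemma measurable_fun_piecewise d d' (T : measurableType d) (T' : measurableType d')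
    (A : nat -> set T) (c : nat -> T') (c0 : T') (f : T -> T') :
  (forall k, measurable (A k)) -> (forall k x, A k x -> f x = c k) ->
  (forall x, ~ (\bigcup_k A k) x -> f x = c0) -> measurable_fun setT f.
Proof.
move=> mA fA fnA _ Y mY.
have -> : setT `&` f @^-1` Y =
    \bigcup_k (A k `&` [set _ | Y (c k)]) `|` ((~` \bigcup_k A k) `&` [set _ | Y c0]).
  apply/seteqP; split => x /=.
    move=> [_ Yx]; have [[k _ Akx]|nAx] := pselect ((\bigcup_k A k) x).
      by left; exists k => //; split => //; rewrite -(fA k x Akx).
    by right; split => //; rewrite -(fnA x nAx).
  by move=> [[k _ [Akx Yk]]|[nAx Y0]]; split; rewrite // ?(fA k x Akx) ?(fnA x nAx).
have measurable_const_set (P : Prop) : measurable [set _ : T | P].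
  have [p|np] := pselect P.
    by rewrite (_ : [set _ | P] = setT) //; apply/seteqP; split.
  by rewrite (_ : [set _ | P] = set0) //; apply/seteqP; split.
apply: measurableU; first by apply: bigcupT_measurable => k; exact: measurableI.
by apply: measurableI => //; apply/measurableC/bigcupT_measurable.
Qed.

Section real_bounds.
Context {R : realType}.
Local Open Scope ereal_scope.

Lemma nneseries_ge_term (u : nat -> \bar R) k :
  (forall n, 0 <= u n) -> u k <= \sum_(n <oo) u n.
Proof. by move=> u0; rewrite (@nneseriesD1 _ _ k) // leeDl // nneseries_ge0. Qed.

Lemma nneseries_geometric_half_le (K : R) : (0 <= K)%R ->
  \sum_(k <oo) (K * 2^-1 ^+ k)%:E <= (K * 2)%:E.
Proof.
move=> K0; apply: lime_le.
  by apply: is_cvg_nneseries => k _; rewrite lee_fin mulr_ge0 // exprn_ge0.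
apply: nearW => n; rewrite sumEFin lee_fin.
have half_lt1 : (`|2^-1| < 1 :> R)%R by rewrite ger0_norm ?invf_lt1 ?ltr1n.
have half_gt0 : (0 < 2^-1 :> R)%R by rewrite invr_gt0.
have := geometric_le_lim n K0 half_gt0 half_lt1.
by rewrite (_ : (1 - 2^-1)^-1 = 2 :> R)%R //; field.
Qed.

Local Close Scope ereal_scope.

Lemma exp2_le_expR (k : nat) : 2 ^+ k <= expR k%:R :> R.
Proof.
rewrite -[k%:R]mulr1 expRM_natl; apply: lerXn2r; rewrite ?nnegrE //.
by have := expR_ge1Dx (1 : R); rewrite (_ : 1 + 1 = 2 :> R).
Qed.

Lemma expRN_le_half_pow (k : nat) : expR (- k%:R) <= 2^-1 ^+ k :> R.
Proof.
rewrite expRN exprVn lef_pV2 ?posrE ?expR_gt0 ?exprn_gt0 //.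
exact: exp2_le_expR.
Qed.

Lemma expRN_powS_le_half_pow (N k : nat) :
  expR (- (N.+2%:R * k%:R)) * k.+1%:R ^+ N <= 2^-1 ^+ k :> R.
Proof.
have powS_le : k.+1%:R ^+ N <= expR (k * N)%:R :> R.
  apply: le_trans (exp2_le_expR _); rewrite exprM; apply: lerXn2r; rewrite ?nnegrE //.
  by rewrite -natrX ler_nat ltn_expl.
apply: le_trans (_ : expR (- (N.+2%:R * k%:R)) * expR (k * N)%:R <= _).
  by rewrite ler_wpM2l ?expR_ge0.
rewrite -expRD (_ : _ + _ = - (2 * k%:R)); last by rewrite natrM -addn2 natrD; ring.
apply: le_trans (expRN_le_half_pow k).
by rewrite ler_expR lerN2 ler_peMl // ler1n.
Qed.

Lemma natr_le_exp (k n : nat) : (0 < n)%N -> k%:R <= k%:R ^+ n :> R.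
Proof. by case: k => [|k] n0; rewrite ?expr0n ?gtn_eqF // ler_eXnr // ler1n. Qed.

Lemma expR_Nquartic_le (t r c s : R) (k : nat) : 0 < t -> 1 <= r -> c <= t * r ->
  (r * k%:R) ^+ 2 <= s -> expR (- t * s ^+ 2) <= expR (- (c * k%:R)).
Proof.
move=> t0 r1 ctr rks; rewrite ler_expR mulNr lerN2.
have k_le4 : k%:R <= k%:R ^+ 4 :> R by exact: natr_le_exp.
have rk4 : (r * k%:R) ^+ 4 <= s ^+ 2.
  rewrite (_ : 4 = 2 * 2)%N // exprM lerXn2r ?nnegrE ?sqr_ge0 //.
  exact: le_trans (sqr_ge0 _) rks.
apply: le_trans (_ : t * (r * k%:R) ^+ 4 <= _); last by rewrite ler_pM2l.
apply: le_trans (_ : t * r * k%:R <= _); first by rewrite ler_wpM2r.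
rewrite exprMn -mulrA ler_wpM2l ?(ltW t0) // ler_pM ?(le_trans ler01 r1) //.
exact: ler_eXnr.
Qed.

End real_bounds.

Section lebesgue_RN.
Variables (R : realType) (N : nat) (mu : {measure set (N.-tuple R) -> \bar R}).
Hypothesis hmu : is_lebesgue_RN mu.
Local Notation RN := (N.-tuple R).

Definition box (a b : 'I_N -> R) : set RN := [set x | forall i, a i < tnth x i <= b i].

Lemma measurable_box a b : measurable (box a b).
Proof.
have -> : box a b = \bigcap_(i in [set: 'I_N])
    (setT `&` ((fun x => tnth x i) @^-1` `]a i, b i])).
  apply/seteqP; split => x /=.
    by move=> h i _; split => //; rewrite /= in_itv /= h.
  by move=> h i; have [_ /=] := h i I; rewrite in_itv.
apply: fin_bigcap_measurable; first exact: finite_finset.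
by move=> i _; apply: measurable_tnth => //; exact: measurable_itv.
Qed.

Definition cube (r : R) : set RN := box (fun=> - r) (fun=> r).

Lemma mu_cube r : 0 <= r -> mu (cube r) = ((2 * r) ^+ N)%:E.
Proof.
move=> r0; rewrite hmu => [|_]; last by rewrite ge0_cp.
by rewrite prodr_const card_ord opprK; congr (_ ^+ _)%:E; ring.
Qed.

Lemma sqnormRN_ge0 (x : RN) : 0 <= sqnormRN x.
Proof. by apply: sumr_ge0 => i _; rewrite -expr2 sqr_ge0. Qed.

Lemma sqr_tnth_le_sqnormRN (x : RN) i : tnth x i ^+ 2 <= sqnormRN x.
Proof.
rewrite /sqnormRN /dotRN (bigD1 i) //= -expr2 lerDl.
by apply: sumr_ge0 => j _; rewrite -expr2 sqr_ge0.
Qed.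

Lemma mem_cube_shell (r : R) (x : RN) : 0 < r ->
  exists k : nat, cube (r * k.+1%:R) x /\ (r * k%:R) ^+ 2 <= sqnormRN x.
Proof.
move=> r0; set s := Num.sqrt (sqnormRN x).
have s0 : 0 <= s := sqrtr_ge0 _.
exists (Num.truncn (s / r)); split.
- move=> i.
  have xs : `|tnth x i| <= s by rewrite -sqrtr_sqr ler_wsqrtr ?sqr_tnth_le_sqnormRN.
  have sk : s < r * (Num.truncn (s / r)).+1%:R by rewrite mulrC -ltr_pdivrMr // truncnS_gt.
  have := ler_norm (tnth x i); have : - tnth x i <= `|tnth x i| by rewrite -normrN ler_norm.
  by move=> ? ?; apply/andP; split; lra.
- rewrite -(sqr_sqrtr (sqnormRN_ge0 x)) -/s lerXn2r ?nnegrE ?mulr_ge0 ?(ltW r0) //.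
  by rewrite mulrC -ler_pdivlMr // truncn_le divr_ge0 // (ltW r0).
Qed.

(* Each xi lies in the cube of half-side r(k+1) for some k with |xi| >= rk;
   there the integrand is at most e^{-(N+2)k}, which beats the volume
   (2r(k+1))^N of that cube. *)
Lemma integral_expR_Nquartic_lt_pinfty (t : R) : 0 < t ->
  (\int[mu]_xi (expR (- t * sqnormRN xi ^+ 2))%:E < +oo)%E.
Proof.
move=> t0; pose r := 1 + N.+2%:R / t.
have r1 : 1 <= r by rewrite lerDl divr_ge0 // (ltW t0).
have r0 : 0 < r := lt_le_trans ltr01 r1.
have tr : N.+2%:R <= t * r.
  by rewrite mulrDr mulr1 mulrCA divff ?gt_eqF // mulr1 lerDr (ltW t0).
pose c k : R := expR (- (N.+2%:R * k%:R)).
apply: (le_lt_trans (integral_le_nneseries_indic mu (c := c)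
  (A := fun k => cube (r * k.+1%:R)) _ _ _ _)).
- by move=> k; exact: measurable_box.
- by move=> k; exact: expR_ge0.
- by move=> x; rewrite lee_fin expR_ge0.
- move=> x; have [k [xk rk]] := mem_cube_shell x r0.
  apply: le_trans (nneseries_ge_term k _); last first.
    by move=> n; rewrite lee_fin mulr_ge0 ?expR_ge0.
  by rewrite indicE mem_set // mulr1 lee_fin; exact: expR_Nquartic_le t0 r1 tr rk.
have r2N0 : 0 <= (2 * r) ^+ N by rewrite exprn_ge0 // mulr_ge0 // (ltW r0).
apply: (le_lt_trans _ (ltry ((2 * r) ^+ N * 2))).
apply: le_trans (nneseries_geometric_half_le r2N0).
apply: lee_nneseries => [k _ _|k _]; first by rewrite mule_ge0 // lee_fin expR_ge0.
rewrite mu_cube ?mulr_ge0 ?(ltW r0) // -EFinM lee_fin mulrA exprMn mulrCA ler_wpM2l //.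
exact: expRN_powS_le_half_pow.
Qed.

Definition biharm_kernel_bound (t : R) : R :=
  (2 * pi) ^- N * Rintegral mu setT (fun xi => expR (- t * sqnormRN xi ^+ 2)).

Lemma normr_biharm_kernel_re_le t z : 0 < t ->
  `|biharm_kernel_re mu t z| <= biharm_kernel_bound t.
Proof.
move=> t0; have c0 : 0 <= (2 * pi) ^- N :> R.
  by rewrite invr_ge0 exprn_ge0 // mulr_ge0 // pi_ge0.
rewrite normrM (ger0_norm c0) ler_wpM2l //.
apply: le_normr_Rintegral_dom (integral_expR_Nquartic_lt_pinfty t0) => xi _.
rewrite normrM ger0_norm ?expR_ge0 // ler_piMr ?expR_ge0 //.
by rewrite ler_norml cos_le1 cos_geN1.
Qed.

Lemma normr_biharm_sg_re_le (phi : RN -> R) t x : 0 < t ->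
  mu.-integrable setT (EFin \o phi) ->
  `|biharm_sg_re mu t phi x| <= biharm_kernel_bound t * Rintegral mu setT (fun y => `|phi y|).
Proof.
move=> t0 iphi; have iphi_norm := integrable_norm iphi.
rewrite -RintegralZl //; apply: le_normr_Rintegral_dom => [y _|].
  by rewrite normrM ler_wpM2r // normr_biharm_kernel_re_le.
apply: integrable_lty => //.
by apply: eq_integrable (integrableZl measurableT (biharm_kernel_bound t) iphi_norm).
Qed.

Lemma biharm_sg_diff_abs_ge (phi : RN -> R) t x M :
  `|biharm_sg_re mu t phi x| <= M -> `|phi x| - M <= biharm_sg_diff_abs mu t phi x.
Proof.
move=> reM; apply: le_trans (_ : `|phi x - biharm_sg_re mu t phi x| <= _).
  by apply: le_trans (lerB_dist _ _); rewrite lerB.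
by rewrite distrC -sqrtr_sqr ler_wsqrtr // lerDl sqr_ge0.
Qed.

Lemma expL2_modular_ge (g : RN -> R) (A : set RN) (m a : R) :
  measurable A -> 0 <= m -> (forall x, A x -> m <= g x) ->
  ((expR (m ^+ 2 / a ^+ 2) - 1)%:E * mu A <= expL2_modular mu g a)%E.
Proof.
move=> mA m0 mg.
have expR_sub1_ge0 (y : R) : 0 <= y -> 0 <= expR y - 1.
  by move=> y0; rewrite subr_ge0 -expR0 ler_expR.
rewrite -integral_scaled_indic //; last by rewrite expR_sub1_ge0 ?divr_ge0 ?sqr_ge0.
apply: ge0_le_integral_nonmeas => x _.
  by rewrite lee_fin mulr_ge0 ?expR_sub1_ge0 ?divr_ge0 ?sqr_ge0 // indicE.
rewrite indicE lee_fin; case: (boolP (x \in A)) => [/set_mem Ax|_]; last first.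
  by rewrite mulr0 expR_sub1_ge0 ?divr_ge0 ?sqr_ge0.
have mgx := mg x Ax.
by rewrite mulr1 lerD2r ler_expR ler_wpM2r ?invr_ge0 ?sqr_ge0 // lerXn2r ?nnegrE ?(le_trans m0).
Qed.

Lemma expL2_norm_ge (g : RN -> R) (C : R) :
  (forall a, 0 < a < C -> (1 < expL2_modular mu g a)%E) -> (C%:E <= expL2_norm mu g)%E.
Proof.
move=> modular_gt1; apply: le_ereal_inf_tmp => _ [a [a0 amod] <-].
rewrite lee_fin leNgt; apply/negP => aC.
by move: amod; rewrite leNgt modular_gt1 // a0.
Qed.

Section spike_train.
Hypothesis hN : (0 < N)%N.
Let i0 : 'I_N := Ordinal hN.

Definition spike_width (k : nat) : R := expR (- (2 * k%:R ^+ 2)) / 2.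

Definition spike (k : nat) : set RN :=
  box (fun i => if i == i0 then k%:R else 0)
      (fun i => if i == i0 then k%:R + spike_width k else 1).

(* spike k lies in the slab k < x_0 <= k + spike_width k, where the integer
   part of x_0 is k. *)
Definition spike_train (x : RN) : R :=
  (Num.truncn (tnth x i0))%:R * \1_(\bigcup_k spike k) x.

Lemma measurable_spike k : measurable (spike k).
Proof. exact: measurable_box. Qed.

Lemma spike_width_gt0 k : 0 < spike_width k.
Proof. by rewrite divr_gt0 // expR_gt0. Qed.

Lemma spike_width_lt1 k : spike_width k < 1.
Proof. by rewrite ltr_pdivrMr // mul1r (@le_lt_trans _ _ 1) ?ltr1n. Qed.

Lemma mu_spike k : mu (spike k) = (spike_width k)%:E.
Proof.
rewrite hmu => [|i]; last first.
  by case: ifP => _; rewrite ?ler01 // lerDl (ltW (spike_width_gt0 k)).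
congr EFin; rewrite (bigD1 i0) //= big1 ?mulr1 => [|i /negbTE ->]; last by rewrite subr0.
by rewrite addrAC subrr add0r.
Qed.

Lemma spike_train_spike k x : spike k x -> spike_train x = k%:R.
Proof.
move=> xk; rewrite /spike_train indicE mem_set; last by exists k.
have /andP[kx xkw] := xk i0; rewrite !eqxx in kx xkw.
rewrite mulr1 (@truncn_def _ _ k) // ltW //=.
by rewrite (le_lt_trans xkw) // -addn1 natrD ltrD2l spike_width_lt1.
Qed.

Lemma spike_train_out x : ~ (\bigcup_k spike k) x -> spike_train x = 0.
Proof. by move=> nx; rewrite /spike_train indicE memNset ?mulr0. Qed.

Lemma spike_train_ge0 x : 0 <= spike_train x.
Proof. by rewrite mulr_ge0 // indicE. Qed.

Lemma measurable_spike_train : measurable_fun setT spike_train.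
Proof.
apply: (@measurable_fun_piecewise _ _ _ R spike (fun k => k%:R) 0).
- exact: measurable_spike.
- exact: spike_train_spike.
- exact: spike_train_out.
Qed.

Lemma integral_comp_spike_train_le (F : R -> R) (c : R) :
  F 0 = 0 -> (forall k, 0 <= F k%:R) ->
  (forall k, F k%:R * spike_width k <= c * 2^-1 ^+ k) ->
  (\int[mu]_x (F (spike_train x))%:E <= (c * 2)%:E)%E.
Proof.
move=> F0 Fk_ge0 Fk_le.
have c0 : 0 <= c.
  by rewrite -[c]mulr1 -(expr0 2^-1) (le_trans _ (Fk_le 0)) ?mulr_ge0 ?(ltW (spike_width_gt0 _)).
apply: le_trans (integral_le_nneseries_indic mu (c := fun k => F k%:R) (A := spike) _ _ _ _) _.
- exact: measurable_spike.
- exact: Fk_ge0.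
- move=> x; have [[k _ xk]|nx] := pselect ((\bigcup_k spike k) x).
    by rewrite (spike_train_spike xk) lee_fin.
  by rewrite (spike_train_out nx) F0.
- have terms_ge0 x n : (0 <= (F n%:R * \1_(spike n) x)%:E)%E.
    by rewrite lee_fin mulr_ge0 // indicE.
  move=> x; have [[k _ xk]|nx] := pselect ((\bigcup_k spike k) x).
    rewrite (spike_train_spike xk); apply: le_trans (nneseries_ge_term k (terms_ge0 x)).
    by rewrite indicE mem_set // mulr1.
  by rewrite (spike_train_out nx) F0 nneseries_ge0.
apply: le_trans (nneseries_geometric_half_le c0).
apply: lee_nneseries => [k _ _|k _]; first by rewrite mule_ge0 // lee_fin.
by rewrite mu_spike -EFinM lee_fin.
Qed.

Lemma natr_mul_spike_width_le k : k%:R * spike_width k <= 2^-1 ^+ k.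
Proof.
have k_le_sqr : k%:R <= k%:R ^+ 2 :> R by exact: natr_le_exp.
apply: le_trans (expRN_le_half_pow k).
apply: le_trans (_ : expR k%:R * expR (- (2 * k%:R)) <= _); last first.
  by rewrite -expRD ler_expR; lra.
apply: ler_pM => //; first exact: (ltW (spike_width_gt0 k)).
  by have := expR_ge1Dx (k%:R : R); lra.
rewrite ler_pdivrMr // -[X in X <= _]mulr1 ler_pM ?expR_ge0 ?ler1n //.
by rewrite ler_expR lerN2 ler_pM2l.
Qed.

Lemma expR_sqr_sub1_mul_spike_width_le k :
  (expR (k%:R ^+ 2) - 1) * spike_width k <= 2^-1 ^+ k.
Proof.
have k_le_sqr : k%:R <= k%:R ^+ 2 :> R by exact: natr_le_exp.
apply: le_trans (expRN_le_half_pow k).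
apply: le_trans (_ : expR (k%:R ^+ 2) * expR (- (2 * k%:R ^+ 2)) <= _).
  rewrite /spike_width; have := expR_gt0 (k%:R ^+ 2 : R).
  have := expR_gt0 (- (2 * k%:R ^+ 2) : R); nra.
by rewrite -expRD ler_expR; lra.
Qed.

Lemma integrable_spike_train : mu.-integrable setT (EFin \o spike_train).
Proof.
apply/integrableP; split; first by apply/measurable_EFinP; exact: measurable_spike_train.
under eq_integral do rewrite /= ger0_norm ?spike_train_ge0 //.
apply: le_lt_trans (ltry (1 * 2)).
apply: (integral_comp_spike_train_le (F := fun y => y)) => // k.
by rewrite mul1r; exact: natr_mul_spike_width_le.
Qed.

Lemma expL2_modular_spike_train_le :
  (expL2_modular mu (fun x => `|spike_train x|%R) 1 <= (1 * 2)%:E)%E.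
Proof.
rewrite /expL2_modular.
under eq_integral => x _ do rewrite (ger0_norm (spike_train_ge0 x)) expr1n divr1.
apply: (integral_comp_spike_train_le (F := fun y => expR (y ^+ 2) - 1)).
- by rewrite expr0n expR0 subrr.
- by move=> k; rewrite subr_ge0 -expR0 ler_expR sqr_ge0.
- by move=> k; rewrite mul1r; exact: expR_sqr_sub1_mul_spike_width_le.
Qed.

Lemma in_expL2_spike_train : in_expL2 mu spike_train.
Proof.
split; last by exists 1; split => //; exact: le_lt_trans expL2_modular_spike_train_le (ltry _).
split => [|r _]; first exact: measurable_spike_train.
move/integrableP: integrable_spike_train => [_]; apply: le_lt_trans.
rewrite integral_mkcond.
by apply: ge0_le_integral_nonmeas => x _; rewrite /patch; case: ifP; rewrite lee_fin.
Qed.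

Lemma spike_width_mass_gt1 k a : (0 < k)%N -> 0 < a < 4^-1 ->
  1 < (expR ((k%:R / 2) ^+ 2 / a ^+ 2) - 1) * spike_width k.
Proof.
move=> k0 /andP[a0 a4].
have k1 : 1 <= k%:R :> R by rewrite ler1n.
pose E : R := expR (2 * k%:R ^+ 2).
have E3 : 3 <= E by apply: le_trans (expR_ge1Dx _); nra.
(* the mass is then at least (E^2 - 1)/(2E) > 1 *)
have wE : spike_width k * E = 2^-1.
  by rewrite /spike_width mulrAC -expRD addNr expR0 mul1r.
have EE : E * E <= expR ((k%:R / 2) ^+ 2 / a ^+ 2).
  rewrite -expRD ler_expR ler_pdivlMr ?exprn_gt0 //.
  have : a ^+ 2 <= 16^-1.
    by rewrite (_ : 16^-1 = 4^-1 ^+ 2 :> R) ?lerXn2r ?nnegrE ?(ltW a0) ?(ltW a4) //; field.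
  nra.
have := spike_width_gt0 k; nra.
Qed.

Lemma expL2_norm_biharm_sg_spike_train_ge t : 0 < t ->
  ((4^-1)%:E <= expL2_norm mu (biharm_sg_diff_abs mu t spike_train))%E.
Proof.
move=> t0; set M := biharm_kernel_bound t * Rintegral mu setT (fun y => `|spike_train y|).
have reM x : `|biharm_sg_re mu t spike_train x| <= M.
  exact: normr_biharm_sg_re_le t0 integrable_spike_train.
pose k := (Num.truncn (2 * `|M|)).+1.
have kM : 2 * `|M| < k%:R := truncnS_gt _.
apply: expL2_norm_ge => a a_bounds.
apply: (lt_le_trans _ (expL2_modular_ge (m := k%:R / 2) a (measurable_spike k) _ _)).
- by rewrite mu_spike -EFinM lte_fin spike_width_mass_gt1.
- by rewrite divr_ge0.
- move=> x xk; apply: le_trans (biharm_sg_diff_abs_ge (reM x)).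
  rewrite (spike_train_spike xk) ger0_norm //.
  by have := ler_norm M; lra.
Qed.

End spike_train.

End lebesgue_RN.

Theorem proposition3p8 (R : realType) (N : nat) (hN : (1 <= N)%N)
  (mu : {measure set (N.-tuple R) -> \bar R}) (hmu : is_lebesgue_RN mu) :
  exists u0 : N.-tuple R -> R, in_expL2 mu u0 /\
  exists C : R, 0 < C /\
    forall t : R, 0 < t ->
      (C%:E <= expL2_norm mu (biharm_sg_diff_abs mu t u0))%E.
Proof.
exists (spike_train hN); split; first exact: in_expL2_spike_train.
by exists 4^-1; split => // t t0; exact: expL2_norm_biharm_sg_spike_train_ge.
Qed.
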